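(* Let $\Phi=(A;\{E_i\}_{i=0}^d;A^*;\{E^*_i\}_{i=0}^d)$ be a tridiagonal system on $V$ with $d\ge1$, such that $(A,A^* )$ satisfies the $q$-Serre relations, with $E_iV$ the eigenspace of $A$ for $\theta_i=q^{2i-d}$ and $E^*_iV$ the eigenspace of $A^*$ for $\theta^*_i=q^{d-2i}$. Let $\{U_i\}_{i=0}^d$ be its split decomposition, $K:V\to V$ the linear map acting on $U_i$ as $q^{d-2i}I$, $t$ a scalar, $B=A$ and $B^*=tA^*+(1-t)K$. Then for $0\le i\le d$, on $U_i$ we have $$(B^*-\theta^*_1I)\cdots(B^*-\theta^*_iI)=t^i(A^*-\theta^*_1I)\cdots(A^*-\theta^*_iI),$$ and moreover $(B^*-\theta^*_1I)\cdots(B^*-\theta^*_iI)U_i\subseteq U_0$.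
   Context: $\mathcal K$ is an algebraically closed field; $V$ is a nonzero finite-dimensional vector space over $\mathcal K$; $q\in\mathcal K$ is nonzero and not a root of unity; $[3]_q=q^2+1+q^{-2}$. The $q$-Serre relations for $(X,Y)$: $X^3Y-[3]_qX^2YX+[3]_qXYX^2-YX^3=0$ and $Y^3X-[3]_qY^2XY+[3]_qYXY^2-XY^3=0$. Primitive idempotent of a diagonalizable $X$ for eigenvalue $\lambda_i$: $\prod_{j\ne i}\frac{X-\lambda_jI}{\lambda_i-\lambda_j}$. A tridiagonal system on $V$ is a sequence $(A;\{E_i\}_{i=0}^d;A^*;\{E^*_i\}_{i=0}^d)$ with $A,A^*$ diagonalizable, $\{E_i\}$, $\{E^*_i\}$ orderings of their primitive idempotents, $E_iA^*E_j=0$ and $E^*_iAE^*_j=0$ when $|i-j|>1$, and no subspaces other than $0,V$ invariant under both $A$ and $A^*$. Split decomposition: $U_i=(E^*_0V+\cdots+E^*_iV)\cap(E_iV+\cdots+E_dV)$; known: $V=U_0\oplus\cdots\oplus U_d$, $(A-\theta_iI)U_i\subseteq U_{i+1}$, $(A^*-\theta^*_iI)U_i\subseteq U_{i-1}$ ($U_{-1}=U_{d+1}=0$). *)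

From HB Require Import structures.
From mathcomp Require Import all_boot all_order all_algebra.
Set Implicit Arguments. Unset Strict Implicit. Unset Printing Implicit Defensive.
Import Order.TTheory GRing.Theory Num.Theory.
Local Open Scope ring_scope.

(* Conventions: V = 'rV[K]_n (n > 0 since V is nonzero); a linear map X on V is
   represented by a matrix X : 'M[K]_n acting on row vectors, v |-> v *m X. *)

Definition prim_idem (K : fieldType) (n d : nat) (X : 'M[K]_n)
  (th : 'I_d.+1 -> K) (i : 'I_d.+1) : 'M[K]_n :=
  \prod_(j < d.+1 | j != i) ((th i - th j)^-1 *: (X - (th j)%:M)).

Definition diag_with_eigenvalues (K : fieldType) (n d : nat) (X : 'M[K]_n)
  (th : 'I_d.+1 -> K) : Prop :=
  [/\ diagonalizable X, injective th &
      forall a, eigenvalue X a <-> exists i, a = th i].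

Definition tridiagonal_system (K : fieldType) (n d : nat)
  (A As : 'M[K]_n) (th ths : 'I_d.+1 -> K) : Prop :=
  [/\ diag_with_eigenvalues A th,
      diag_with_eigenvalues As ths,
      (forall i j : 'I_d.+1, (i.+1 < j)%N \/ (j.+1 < i)%N ->
          prim_idem A th i *m As *m prim_idem A th j = 0),
      (forall i j : 'I_d.+1, (i.+1 < j)%N \/ (j.+1 < i)%N ->
          prim_idem As ths i *m A *m prim_idem As ths j = 0) &
      (forall W : 'M[K]_n, (W *m A <= W)%MS -> (W *m As <= W)%MS ->
          (W == (0 : 'M[K]_n))%MS \/ (W == (1%:M : 'M[K]_n))%MS)].

Definition split_comp (K : fieldType) (n d : nat)
  (A As : 'M[K]_n) (th ths : 'I_d.+1 -> K) (i : nat) : 'M[K]_n :=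
  ((\sum_(j < d.+1 | (j <= i)%N) prim_idem As ths j) :&:
   (\sum_(j < d.+1 | (i <= j)%N) prim_idem A th j))%MS.

Definition q_serre (K : fieldType) (n : nat) (q : K) (X Y : 'M[K]_n) : Prop :=
  let q3 := q ^+ 2 + 1 + q ^- 2 in
  X ^+ 3 * Y - q3 *: (X ^+ 2 * Y * X) + q3 *: (X * Y * X ^+ 2) - Y * X ^+ 3 = 0 /\
  Y ^+ 3 * X - q3 *: (Y ^+ 2 * X * Y) + q3 *: (Y * X * Y ^+ 2) - X * Y ^+ 3 = 0.

Definition qth (K : fieldType) (q : K) (d i : nat) : K := q ^ (2 * i%:Z - d%:Z).
Definition qths (K : fieldType) (q : K) (d i : nat) : K := q ^ (d%:Z - 2 * i%:Z).

From HB Require Import structures.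
From mathcomp Require Import all_boot all_order all_algebra.
From mathcomp Require Import zify.
Set Implicit Arguments. Unset Strict Implicit. Unset Printing Implicit Defensive.
Import Order.TTheory GRing.Theory Num.Theory.
Local Open Scope ring_scope.

(* On U_i the map K (the matrix Km) acts as the scalar theta*_i, so there
   B* - theta*_i = t (A* - theta*_i).  Moreover A* - theta*_i maps U_i into
   U_(i-1): it kills E*_i V, so it maps E*_0 V + ... + E*_i V into
   E*_0 V + ... + E*_(i-1) V, and since E_j A* E_k = 0 for j > k + 1 it maps
   E_i V + ... + E_d V into E_(i-1) V + ... + E_d V.  Applying the factors one
   at a time, starting with theta*_i, each step contributes a factor t and
   lowers the index by one. *)

Lemma eigenvector_mulmx_prod (K : comPzRingType) (n : nat) (X : 'M[K]_n)
    (w : 'rV[K]_n) (a : K) (I : Type) (r : seq I) (P : pred I) (c b : I -> K) :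
  w *m X = a *: w ->
  w *m \prod_(j <- r | P j) (c j *: (X - (b j)%:M)) =
  (\prod_(j <- r | P j) (c j * (a - b j))) *: w.
Proof.
move=> wX; elim/big_rec2: _ => [|j x M _ IH]; first by rewrite mulmx1 scale1r.
rewrite -mulmxE mulmxA -scalemxAr mulmxBr wX mul_mx_scalar -scalerBl.
by rewrite -!scalemxAl IH !scalerA.
Qed.

Lemma mulmx_scalar_rows (K : fieldType) (p n : nat) (W : 'M[K]_(p, n))
    (M : 'M[K]_n) (c : K) :
  (forall v : 'rV[K]_n, (v <= W)%MS -> v *m M = c *: v) ->
  forall m (v : 'M[K]_(m, n)), (v <= W)%MS -> v *m M = c *: v.
Proof.
move=> Mrow m v vW; apply/row_matrixP => k; rewrite row_mul linearZ.
by apply: Mrow; apply: submx_trans vW; apply: row_sub.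
Qed.

Section PrimitiveIdempotents.
Variables (K : fieldType) (n d : nat) (X : 'M[K]_n) (th : 'I_d.+1 -> K).

Lemma prim_idem_eigenvector (w : 'rV[K]_n) (m k : 'I_d.+1) :
  injective th -> w *m X = th m *: w ->
  w *m prim_idem X th k = (k == m)%:R *: w.
Proof.
move=> th_inj wX; rewrite /prim_idem (eigenvector_mulmx_prod _ _ _ _ wX).
have [->|neq_km] := eqVneq k m; last first.
  by rewrite (bigD1 m) 1?eq_sym //= subrr mulr0 mul0r.
rewrite big1 // => j neq_jm; rewrite mulVf // subr_eq0.
by apply: contra neq_jm => /eqP /th_inj ->.
Qed.

Hypothesis Xdiag : diag_with_eigenvalues X th.

Lemma row_sum_eigenvectors (v : 'rV[K]_n) :
  exists vs : 'I_d.+1 -> 'rV[K]_n,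
    v = \sum_k vs k /\ forall k, vs k *m X = th k *: vs k.
Proof.
case: Xdiag => diagX _ eigX.
have [rs _ sum_rs] := proj1 (diagonalizablePeigen (f := X)) diagX.
have full : (1%:M <= \sum_(k < d.+1) eigenspace X (th k))%MS.
  rewrite -sum_rs; elim/big_rec: _ => [|r M _ IH]; first by rewrite sub0mx.
  rewrite addsmx_sub IH andbT.
  have [->|nz] := eqVneq (eigenspace X r) 0; first by rewrite sub0mx.
  have [i ->] : exists i, r = th i by apply/eigX.
  exact: (sumsmx_sup i).
have /sub_sumsmxP [u ->] := submx_trans (submx1 v) full.
exists (fun k => u k *m eigenspace X (th k)); split => // k.
by apply/eigenspaceP; rewrite submxMl.
Qed.

Lemma sum_eigenvectors_prim_idem (vs : 'I_d.+1 -> 'rV[K]_n) (k : 'I_d.+1) :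
  (forall j, vs j *m X = th j *: vs j) ->
  (\sum_j vs j) *m prim_idem X th k = vs k.
Proof.
case: Xdiag => _ th_inj _ vsX.
rewrite mulmx_suml (bigD1 k) //= big1 ?addr0.
  by rewrite (prim_idem_eigenvector _ th_inj (vsX k)) eqxx scale1r.
move=> j neq_jk.
by rewrite (prim_idem_eigenvector _ th_inj (vsX j)) eq_sym (negPf neq_jk) scale0r.
Qed.

Lemma sum_prim_idem : \sum_k prim_idem X th k = 1%:M.
Proof.
apply/row_matrixP => i; rewrite -[X in row i X]mul1mx row_mul mulmx_sumr.
have [vs [-> vsX]] := row_sum_eigenvectors (row i 1%:M).
by apply: eq_bigr => k _; rewrite sum_eigenvectors_prim_idem.
Qed.

Lemma prim_idem_eigen (k : 'I_d.+1) :
  prim_idem X th k *m X = th k *: prim_idem X th k.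
Proof.
apply: (mulmx_scalar_rows (W := prim_idem X th k)) => // v /submxP [u ->].
have [vs [-> vsX]] := row_sum_eigenvectors u.
by rewrite sum_eigenvectors_prim_idem.
Qed.

Lemma prim_idem_sum_lower m (v : 'M[K]_(m, n)) (i : 'I_d.+1) :
  (v <= \sum_(j < d.+1 | (j <= i)%N) prim_idem X th j)%MS ->
  (v *m (X - (th i)%:M) <= \sum_(j < d.+1 | (j <= i.-1)%N) prim_idem X th j)%MS.
Proof.
move/sub_sumsmxP=> [u ->]; rewrite mulmx_suml; apply: summx_sub => j le_ji.
rewrite -mulmxA mulmxBr prim_idem_eigen mul_mx_scalar -scalerBl -scalemxAr.
have [->|neq_ji] := eqVneq j i; first by rewrite subrr scale0r sub0mx.
apply/scalemx_sub/(sumsmx_sup j); last exact: submxMl.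
have : nat_of_ord j != i by apply: contra neq_ji => /eqP/val_inj ->.
lia.
Qed.

Lemma prim_idem_sum_upper m (v : 'M[K]_(m, n)) (Y : 'M[K]_n) (i : nat) :
  (forall j k : 'I_d.+1, (k.+1 < j)%N ->
     prim_idem X th j *m Y *m prim_idem X th k = 0) ->
  (v <= \sum_(j < d.+1 | (i <= j)%N) prim_idem X th j)%MS ->
  (v *m Y <= \sum_(j < d.+1 | (i.-1 <= j)%N) prim_idem X th j)%MS.
Proof.
move=> Ytri /sub_sumsmxP [u ->]; rewrite mulmx_suml; apply: summx_sub => j le_ij.
rewrite -[_ *m Y]mulmx1 -sum_prim_idem mulmx_sumr; apply: summx_sub => k _.
have [le_ik|lt_ki] := leqP i.-1 k; first by apply: (sumsmx_sup k); rewrite ?submxMl.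
by rewrite -!mulmxA (mulmxA (prim_idem X th j)) Ytri ?mulmx0 ?sub0mx //; lia.
Qed.

End PrimitiveIdempotents.

Lemma split_comp_lower (K : fieldType) (n d : nat) (A As : 'M[K]_n)
    (th ths : 'I_d.+1 -> K) m (v : 'M[K]_(m, n)) (i : 'I_d.+1) :
  tridiagonal_system A As th ths ->
  (v <= split_comp A As th ths i)%MS ->
  (v *m (As - (ths i)%:M) <= split_comp A As th ths i.-1)%MS.
Proof.
case=> Adiag Asdiag Atri _ _; rewrite /split_comp !sub_capmx => /andP[v_low v_up].
rewrite (prim_idem_sum_lower Asdiag v_low) /=.
rewrite mulmxBr mul_mx_scalar addmx_sub ?eqmx_opp ?scalemx_sub //.
  by apply: (prim_idem_sum_upper Adiag) v_up => j k lt_kj; apply: Atri; right.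
apply: submx_trans v_up _; apply/sumsmx_subP => j le_ij.
by apply: (sumsmx_sup j) => //; lia.
Qed.

Definition lower_prod (K : pzRingType) (n : nat) (M : 'M[K]_n) (f : nat -> K)
    (i : nat) : 'M[K]_n :=
  \prod_(1 <= j < i.+1) (M - (f j)%:M).

Lemma lower_prodSl (K : comPzRingType) (n : nat) (M : 'M[K]_n) (f : nat -> K) i :
  lower_prod M f i.+1 = (M - (f i.+1)%:M) * lower_prod M f i.
Proof.
have scalar_comm (x : K) (N : 'M[K]_n) : GRing.comm N x%:M.
  by rewrite /GRing.comm -!mulmxE scalar_mxC.
rewrite /lower_prod big_nat_recr //=; apply: commr_sym; apply: commr_prod => j _.
apply: commrB; last exact: scalar_comm.
by apply: commr_sym; apply: commrB; [apply: commr_refl | apply: scalar_comm].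
Qed.

Section LoweringProducts.
Variables (K : fieldType) (n d : nat) (L Km : 'M[K]_n) (f : nat -> K).
Variables (U : nat -> 'M[K]_n) (t : K).

Hypothesis U_lower : forall i m (v : 'M[K]_(m, n)),
  (i < d)%N -> (v <= U i.+1)%MS -> (v *m (L - (f i.+1)%:M) <= U i)%MS.
Hypothesis Km_scalar : forall i m (v : 'M[K]_(m, n)),
  (i <= d)%N -> (v <= U i)%MS -> v *m Km = f i *: v.

Let Ls := t *: L + (1 - t) *: Km.

Lemma lower_prod_sub i m (v : 'M[K]_(m, n)) :
  (i <= d)%N -> (v <= U i)%MS -> (v *m lower_prod L f i <= U 0)%MS.
Proof.
elim: i v => [|i IH] v le_id vU; first by rewrite /lower_prod big_geq ?mulmx1.
by rewrite lower_prodSl -mulmxE mulmxA IH ?U_lower // ltnW.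
Qed.

Lemma lower_prod_affine i m (v : 'M[K]_(m, n)) :
  (i <= d)%N -> (v <= U i)%MS ->
  v *m lower_prod Ls f i = t ^+ i *: (v *m lower_prod L f i).
Proof.
elim: i v => [|i IH] v le_id vU; first by rewrite /lower_prod !big_geq ?scale1r.
have step : v *m (Ls - (f i.+1)%:M) = t *: (v *m (L - (f i.+1)%:M)).
  rewrite !mulmxBr mulmxDr -!scalemxAr (Km_scalar le_id vU) !mul_mx_scalar.
  by rewrite scalerBl scale1r scalerBr scalerA mulrC -scalerA addrA addrAC addrK.
rewrite !lower_prodSl -!mulmxE !mulmxA step -scalemxAl IH ?(ltnW le_id) ?U_lower //.
by rewrite scalerA -exprS.
Qed.

End LoweringProducts.

Theorem lemma7p5 (K : closedFieldType) (n d : nat) (q t : K)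
  (A As Km : 'M[K]_n.+1) :
  q != 0 ->
  (forall k : nat, (0 < k)%N -> q ^+ k != 1) ->
  (1 <= d)%N ->
  tridiagonal_system A As (fun i : 'I_d.+1 => qth q d i)
                          (fun i : 'I_d.+1 => qths q d i) ->
  q_serre q A As ->
  (forall (i : nat) (v : 'rV[K]_n.+1), (i <= d)%N ->
     (v <= split_comp A As (fun i : 'I_d.+1 => qth q d i)
                           (fun i : 'I_d.+1 => qths q d i) i)%MS ->
     v *m Km = qths q d i *: v) ->
  let B := A in
  let Bs := t *: As + (1 - t) *: Km in
  let U := split_comp A As (fun i : 'I_d.+1 => qth q d i)
                           (fun i : 'I_d.+1 => qths q d i) in
  forall i : nat, (i <= d)%N ->
    (forall v : 'rV[K]_n.+1, (v <= U i)%MS ->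
       v *m (\prod_(1 <= j < i.+1) (Bs - (qths q d j)%:M)) =
       t ^+ i *: (v *m (\prod_(1 <= j < i.+1) (As - (qths q d j)%:M)))) /\
    (U i *m (\prod_(1 <= j < i.+1) (Bs - (qths q d j)%:M)) <= U 0%N)%MS.
Proof.
move=> _ _ _ sys _ Km_rows B Bs U i le_id.
have U_lower j m (v : 'M_(m, n.+1)) :
    (j < d)%N -> (v <= U j.+1)%MS ->
    (v *m (As - (qths q d j.+1)%:M) <= U j)%MS.
  move=> lt_jd.
  by apply: (split_comp_lower (i := Ordinal (lt_jd : j.+1 < d.+1)%N) sys).
have Km_scalar j m (v : 'M_(m, n.+1)) :
    (j <= d)%N -> (v <= U j)%MS -> v *m Km = qths q d j *: v.
  by move=> le_jd; apply: mulmx_scalar_rows => w; apply: Km_rows.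
have affine := lower_prod_affine t U_lower Km_scalar le_id.
split=> [v vU|]; first exact: affine.
by rewrite affine // scalemx_sub // (lower_prod_sub U_lower).
Qed.
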